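(* Let $(P_n(x))_{n\ge0}$ be a sequence of polynomials such that $\sum_{n\ge0}P_n(x)\frac{t^n}{n!}=f(t)e^{xt}$ for some $f$ holomorphic at $0$ with $f(0)\neq0$, and such that $P_n(1-x)=(-1)^nP_n(x)$ for all $n\ge0$. Let $N$ be a positive integer. If the function $F(t)=f(t)-\sum_{k=0}^{N}B_k(0)\frac{t^k}{k!}$ is even, then $P_n(x)=B_n(x)$ for all $n\ge0$ and $f(t)=\frac{t}{e^t-1}$.
   Context: $B_n(x)$ denotes the Bernoulli polynomials, defined by $\sum_{n\ge0}B_n(x)\frac{t^n}{n!}=\frac{te^{xt}}{e^t-1}$; $B_k(0)$ are the Bernoulli numbers. *)

From mathcomp Require Import all_boot all_algebra complex.
From mathcomp Require Export reals.
Set Implicit Arguments. Unset Strict Implicit. Unset Printing Implicit Defensive.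
Import GRing.Theory Num.Theory.
Local Open Scope ring_scope.

(* Formal power series in t are represented by their (ordinary) coefficient
   sequences  a : nat -> A, i.e.  a(t) = \sum_k a k t^k. *)

Definition fps_mul (A : comNzRingType) (a b : nat -> A) (n : nat) : A :=
  \sum_(i < n.+1) a i * b (n - i)%N.

Definition exp_xt (F : fieldType) (j : nat) : {poly F} := (j`!%:R)^-1 *: 'X^j.

Definition expm1_coef (F : fieldType) (j : nat) : F :=
  if (0 < j)%N then (j`!%:R)^-1 else 0.

(* Bernoulli numbers B_k = B_k(0), computed by the recurrence equivalent to
   the generating function t/(e^t-1) = \sum_k B_k t^k/k!, namely
   B_0 = 1 and \sum_(k <= n) 'C(n+1,k) B_k = 0 for n >= 1. *)
Fixpoint bern_seq (F : fieldType) (n : nat) : seq F :=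
  match n with
  | 0 => [:: 1]
  | m.+1 => let s := bern_seq F m in
            rcons s (- (m.+2%:R)^-1 * \sum_(k < m.+1) 'C(m.+2, k)%:R * s`_k)
  end.

Definition bernoulli (F : fieldType) (n : nat) : F := (bern_seq F n)`_n.

Definition bernoulli_poly (F : fieldType) (n : nat) : {poly F} :=
  \sum_(k < n.+1) ('C(n, k)%:R * bernoulli F k) *: 'X^(n - k).

(* Evaluating P_n(1 - x) = (-1)^n P_n(x) at x = 0 shows f(t) e^t = f(-t), so
   f(t) (e^t - 1) = f(-t) - f(t) only involves the odd coefficients of f.  The
   evenness of F makes these the odd coefficients of t/(e^t - 1) (the odd
   Bernoulli numbers beyond B_1 vanish, which is needed when N is small), hence
   f(t) (e^t - 1) = t.  As e^t - 1 is t times a unit, f = t/(e^t - 1), and then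
   P_n = B_n. *)

From mathcomp Require Import all_boot all_algebra complex.
From mathcomp Require Import boolp functions ring.
Import GRing.Theory Num.Theory.
Local Open Scope ring_scope.

(* [functions] makes [nat -> A] a ring pointwise: [a - b] is the coefficientwise
   difference, while the product of series is [fps_mul], never [*]. *)
Section FormalPowerSeries.
Context {A : comNzRingType}.
Implicit Types a b d : nat -> A.

Definition fps_one : nat -> A := fun j => (j == 0%N)%:R.
Definition fps_X : nat -> A := fun j => (j == 1%N)%:R.
Definition fps_reflect a : nat -> A := fun j => (-1) ^+ j * a j.

Lemma fps_mul_coefM n a b (p q : {poly A}) :
  (forall j, (j <= n)%N -> p`_j = a j) -> (forall j, (j <= n)%N -> q`_j = b j) ->
  fps_mul a b n = (p * q)`_n.
Proof.
move=> pa qb; rewrite /fps_mul coefM; apply: eq_bigr => i _.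
by rewrite pa ?qb ?leq_subr // -ltnS.
Qed.

(* Truncated at degree n, both sides are coefficients of polynomial products. *)
Lemma fps_mulA a b d : fps_mul (fps_mul a b) d = fps_mul a (fps_mul b d).
Proof.
apply/funext => n; pose trunc e : {poly A} := \poly_(i < n.+1) e i.
have truncE e j : (j <= n)%N -> (trunc e)`_j = e j by rewrite coef_poly ltnS => ->.
have fps_mul_trunc e e' j : (j <= n)%N -> fps_mul e e' j = (trunc e * trunc e')`_j.
  by move=> jn; apply: fps_mul_coefM => k kj; rewrite truncE // (leq_trans kj).
rewrite [LHS](@fps_mul_coefM _ _ _ (trunc a * trunc b) (trunc d)).
- rewrite [RHS](@fps_mul_coefM _ _ _ (trunc a) (trunc b * trunc d)) ?mulrA //.
  + exact: truncE.
  + by move=> j jn; rewrite fps_mul_trunc.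
- by move=> j jn; rewrite fps_mul_trunc.
- exact: truncE.
Qed.

Lemma fps_mulBl a b d : fps_mul (a - b) d = fps_mul a d - fps_mul b d.
Proof.
by apply/funext => n; rewrite !fctE /fps_mul -sumrB; apply: eq_bigr => i _; rewrite mulrBl.
Qed.

Lemma fps_mulBr a b d : fps_mul a (b - d) = fps_mul a b - fps_mul a d.
Proof.
by apply/funext => n; rewrite !fctE /fps_mul -sumrB; apply: eq_bigr => i _; rewrite mulrBr.
Qed.

Lemma fps_mulr1 a : fps_mul a fps_one = a.
Proof.
apply/funext => n; rewrite /fps_mul big_ord_recr /= subnn mulr1 big1 ?add0r // => i _.
by rewrite /fps_one subn_eq0 leqNgt ltn_ord mulr0.
Qed.

Lemma fps_mul_reflect a b :
  fps_mul (fps_reflect a) (fps_reflect b) = fps_reflect (fps_mul a b).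
Proof.
apply/funext => n; rewrite /fps_mul /fps_reflect mulr_sumr; apply: eq_bigr => i _.
by rewrite mulrACA -exprD subnKC // -ltnS.
Qed.

Lemma fps_reflectB a b : fps_reflect (a - b) = fps_reflect a - fps_reflect b.
Proof. by apply/funext => n; rewrite !fctE /fps_reflect mulrBr. Qed.

Lemma fps_reflect_one : fps_reflect fps_one = fps_one.
Proof. by apply/funext => -[|n]; rewrite /fps_reflect /fps_one ?mul1r ?mulr0. Qed.

Lemma fps_reflect_X : fps_reflect fps_X = - fps_X.
Proof.
apply/funext => n; rewrite fctE /fps_reflect /fps_X.
by case: n => [|[|n]]; rewrite ?mulr0 ?oppr0 ?mulN1r.
Qed.

End FormalPowerSeries.

Section Exponential.
Context {F : fieldType}.
Implicit Types (a b c : nat -> F) (x : F).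

Definition fps_exp x : nat -> F := fun j => x ^+ j / j`!%:R.

Lemma fps_exp0 : fps_exp 0 = fps_one.
Proof. by apply/funext => -[|j]; rewrite /fps_exp expr0n ?fact0 ?divr1 ?mul0r. Qed.

Lemma fps_reflect_exp x : fps_reflect (fps_exp x) = fps_exp (- x).
Proof. by apply/funext => j; rewrite /fps_reflect /fps_exp mulrA -exprNn. Qed.

Lemma expm1_coefE : expm1_coef F = fps_exp 1 - fps_one.
Proof.
apply/funext => -[|j]; rewrite fctE /expm1_coef /fps_exp expr1n mul1r /=.
  by rewrite fact0 invr1 subrr.
by rewrite subr0.
Qed.

Lemma fps_mul_expm1_inj : injective (fun a => fps_mul a (expm1_coef F)).
Proof.
move=> a b eq_ab; apply/funext => n; elim/ltn_ind: n => n IH.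
have := congr1 (fun e => e n.+1) eq_ab => /=.
rewrite /fps_mul !big_ord_recr /= !subnn !subSnn /expm1_coef /= !mulr0 !addr0.
under eq_bigr => i _ do rewrite IH ?ltn_ord //.
by rewrite (factS 0) fact0 muln1 !divr1 => /addrI.
Qed.

Lemma horner_fps_exp_xt c n x :
  (fps_mul (fun k => (c k)%:P) (@exp_xt F) n).[x] = fps_mul c (fps_exp x) n.
Proof.
rewrite /fps_mul horner_sum; apply: eq_bigr => i _.
by rewrite /exp_xt mul_polyC !hornerZ hornerXn [_^-1 * _]mulrC.
Qed.

Lemma fps_mul_exp1_of_sym (P : nat -> {poly F}) c :
  (forall n, (n`!%:R)^-1 *: P n = fps_mul (fun k => (c k)%:P) (@exp_xt F) n) ->
  (forall n, (P n).[1] = (-1) ^+ n * (P n).[0]) ->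
  fps_mul c (fps_exp 1) = fps_reflect c.
Proof.
move=> P_egf P_sym; apply/funext => n.
have := congr1 (horner^~ 0) (P_egf n); have := congr1 (horner^~ 1) (P_egf n).
rewrite /= !hornerZ !horner_fps_exp_xt fps_exp0 fps_mulr1 => <- P0.
by rewrite P_sym mulrCA P0.
Qed.

End Exponential.

Section CharZero.
Context {F : fieldType} (F_char0 : [pchar F] =i pred0).
Implicit Types (c : nat -> F) (x y : F).

Lemma natf_eq0 n : (n%:R == 0 :> F) = (n == 0)%N.
Proof. exact: (pcharf0P F).1 F_char0 n. Qed.

Lemma fact_neq0 n : n`!%:R != 0 :> F.
Proof. by rewrite natf_eq0 -lt0n fact_gt0. Qed.

Lemma oppr_eq_self x : (- x == x) = (x == 0).
Proof. by rewrite -subr_eq0 -opprD oppr_eq0 -mulr2n -mulr_natl mulf_eq0 natf_eq0. Qed.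

Lemma inv_fact_mul i n : (i <= n)%N ->
  (i`!%:R)^-1 * ((n - i)`!%:R)^-1 = 'C(n, i)%:R / n`!%:R :> F.
Proof.
move=> le_in; rewrite -(bin_fact le_in) !natrM !invfM mulrA mulfV ?mul1r //.
by rewrite natf_eq0 -lt0n bin_gt0.
Qed.

Lemma fps_mul_exp x y : fps_mul (fps_exp x) (fps_exp y) = fps_exp (x + y).
Proof.
apply/funext => n; rewrite /fps_mul /fps_exp addrC exprDn mulr_suml.
apply: eq_bigr => i _; have le_in : (i <= n)%N by rewrite -ltnS.
by rewrite mulrACA inv_fact_mul // -mulr_natl; ring.
Qed.

Definition bernoulli_coef k : F := bernoulli F k / k`!%:R.

Lemma size_bern_seq m : size (bern_seq F m) = m.+1.
Proof. by elim: m => [|m IH] //=; rewrite size_rcons IH. Qed.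

Lemma nth_bern_seq m k : (k <= m)%N -> (bern_seq F m)`_k = bernoulli F k.
Proof.
elim: m => [|m IH]; first by rewrite leqn0 => /eqP ->.
rewrite leq_eqVlt => /predU1P [-> //|lt_km].
by rewrite /= nth_rcons size_bern_seq lt_km IH.
Qed.

Lemma sum_binom_bernoulli m :
  \sum_(k < m.+2) 'C(m.+2, k)%:R * bernoulli F k = 0.
Proof.
rewrite big_ord_recr /= binSn.
have -> : bernoulli F m.+1 =
    - (m.+2%:R)^-1 * \sum_(k < m.+1) 'C(m.+2, k)%:R * bernoulli F k.
  rewrite /bernoulli /= nth_rcons size_bern_seq ltnn eqxx; congr (_ * _).
  by apply: eq_bigr => k _; rewrite nth_bern_seq // -ltnS.
by rewrite mulrA mulrN mulfV ?natf_eq0 // mulN1r subrr.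
Qed.

Lemma bernoulli_coef_mul_expm1 : fps_mul bernoulli_coef (expm1_coef F) = fps_X.
Proof.
apply/funext => n; rewrite /fps_mul big_ord_recr /= subnn /expm1_coef /= mulr0 addr0.
case: n => [|m]; first by rewrite big_ord0.
transitivity ((m.+1`!%:R)^-1 * \sum_(i < m.+1) 'C(m.+1, i)%:R * bernoulli F i).
  rewrite mulr_sumr; apply: eq_bigr => i _ /=.
  have le_im : (i <= m.+1)%N by rewrite ltnW.
  rewrite subn_gt0 ltn_ord /bernoulli_coef -mulrA inv_fact_mul //.
  by field; rewrite fact_neq0.
case: m => [|m]; first by rewrite big_ord1 /fps_X /= mulr1 (factS 0) fact0 muln1 invr1 mul1r.
by rewrite sum_binom_bernoulli mulr0.
Qed.

(* -t/(e^-t - 1) = t/(e^t - 1) + t: reflect the defining identity and multiply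
   by e^t. *)
Lemma fps_reflect_bernoulli_coef :
  fps_reflect bernoulli_coef = bernoulli_coef + fps_X.
Proof.
set rb := fps_reflect bernoulli_coef.
have rb_expN1 : fps_mul rb (fps_exp (-1)) = rb - fps_X.
  have := congr1 fps_reflect bernoulli_coef_mul_expm1.
  rewrite -fps_mul_reflect expm1_coefE fps_reflectB fps_reflect_one fps_reflect_exp.
  rewrite fps_mulBr fps_mulr1 fps_reflect_X => /eqP; rewrite subr_eq => /eqP ->.
  by rewrite addrC.
have rb_exp : fps_mul rb (fps_exp 1) = rb + fps_mul fps_X (fps_exp 1).
  apply/eqP; rewrite -subr_eq -fps_mulBl -rb_expN1.
  by rewrite fps_mulA fps_mul_exp addNr fps_exp0 fps_mulr1.
apply/eqP; rewrite -subr_eq; apply/eqP; apply: fps_mul_expm1_inj => /=.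
rewrite bernoulli_coef_mul_expm1 expm1_coefE fps_mulBl !fps_mulBr !fps_mulr1 rb_exp.
ring.
Qed.

Lemma bernoulli_odd k : odd k -> k != 1%N -> bernoulli F k = 0.
Proof.
move=> k_odd k_neq1; have := congr1 (fun e => e k) fps_reflect_bernoulli_coef.
rewrite fctE /fps_reflect /fps_X (negPf k_neq1) addr0 -signr_odd k_odd mulN1r.
move/eqP; rewrite oppr_eq_self mulf_eq0 invr_eq0 (negPf (fact_neq0 k)) orbF.
by move/eqP.
Qed.

Lemma bernoulli_polyE n : bernoulli_poly F n =
  n`!%:R *: fps_mul (fun k => (bernoulli_coef k)%:P) (@exp_xt F) n.
Proof.
rewrite /bernoulli_poly /fps_mul scaler_sumr; apply: eq_bigr => i _.
have le_in : (i <= n)%N by rewrite -ltnS.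
rewrite /exp_xt mul_polyC !scalerA /bernoulli_coef -!mulrA inv_fact_mul //.
by congr (_ *: _); field; rewrite fact_neq0.
Qed.

Lemma eq_bernoulli_coef c :
  fps_mul c (fps_exp 1) = fps_reflect c ->
  (forall k, odd k -> c k = bernoulli_coef k) -> c = bernoulli_coef.
Proof.
move=> c_sym c_odd; apply: fps_mul_expm1_inj => /=.
rewrite bernoulli_coef_mul_expm1 expm1_coefE fps_mulBr fps_mulr1 c_sym.
apply/funext => k; rewrite !fctE /= /fps_reflect.
have [k_odd|k_even] := boolP (odd k).
  have := congr1 (fun e => e k) fps_reflect_bernoulli_coef.
  by rewrite fctE /fps_reflect c_odd //= => ->; rewrite addrAC subrr add0r.
rewrite -signr_odd (negPf k_even) expr0 mul1r subrr /fps_X.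
by case: eqP k_even => // ->.
Qed.

End CharZero.

Theorem mainTheorem5 (R : realType) (P : nat -> {poly R[i]}) (c : nat -> R[i])
  (N : nat) :
  (* f(t) = \sum_k c k t^k is holomorphic at 0: positive radius of convergence *)
  (exists r : R[i], exists M : R[i], 0 < r /\ forall k, `|c k| * r ^+ k <= M) ->
  (* f(0) <> 0 *)
  c 0%N != 0 ->
  (* \sum_n P_n(x) t^n/n! = f(t) e^{xt} *)
  (forall n, (n`!%:R)^-1 *: P n = fps_mul (fun k => (c k)%:P) (@exp_xt _) n) ->
  (* P_n(1-x) = (-1)^n P_n(x) *)
  (forall n (x : R[i]), (P n).[1 - x] = (-1) ^+ n * (P n).[x]) ->
  (0 < N)%N ->
  (* F(t) = f(t) - \sum_(k<=N) B_k(0) t^k/k! is even: F(-t) = F(t) *)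
  (let Fc k := c k - (if (k <= N)%N then bernoulli _ k / k`!%:R else 0) in
   forall k, (-1) ^+ k * Fc k = Fc k) ->
  (* conclusion: P_n = B_n for all n, and f(t) = t/(e^t-1), i.e. f(t)(e^t-1) = t *)
  (forall n, P n = bernoulli_poly _ n) /\
  (forall n, fps_mul c (@expm1_coef _) n = (n == 1%N)%:R).
Proof.
move=> _ _ P_egf P_sym N_gt0 F_even.
have char0 : [pchar R[i]] =i pred0 := pchar_num _.
have c_sym : fps_mul c (fps_exp 1) = fps_reflect c.
  by apply: fps_mul_exp1_of_sym P_egf _ => n; rewrite -[1 in LHS]subr0 P_sym.
have c_odd k : odd k -> c k = bernoulli_coef k.
  move=> k_odd; move: (F_even k) => /=; rewrite -signr_odd k_odd expr1 mulN1r.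
  move/eqP; rewrite oppr_eq_self // subr_eq0 => /eqP ->; case: leqP => // lt_Nk.
  rewrite /bernoulli_coef bernoulli_odd ?mul0r //.
  by apply: contraTneq lt_Nk => ->; rewrite -leqNgt.
have c_bern : c = bernoulli_coef by exact: eq_bernoulli_coef.
split=> n; last by rewrite c_bern (bernoulli_coef_mul_expm1 char0).
apply: (scalerI (invr_neq0 (fact_neq0 char0 n))).
by rewrite P_egf bernoulli_polyE // scalerA mulVf ?scale1r ?fact_neq0 // c_bern.
Qed.
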